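(* Let $x_c\in\mathbb{R}^{n_0}$, $\varepsilon>0$, $\mathcal{X}=\{x:\|x-x_c\|_\infty\le\varepsilon\}$, and let $J:\mathbb{R}^{n_0}\to\mathbb{R}$ be twice continuously differentiable on an open set containing $\mathcal{X}$, with $\|\nabla^2J(x)\|_2\le\lambda$ for all $x\in\mathcal{X}$, where $\lambda>0$. For $y\in\mathcal{X}$ define $$\overline{J}^1(y)=J(y)+\sup_{x\in\mathcal{X}}\Big(\nabla J(y)^\top(x-y)+\frac{\lambda}{2}\|x-y\|_2^2\Big).$$ Let $\hat\delta=\varepsilon\,\mathrm{sign}(\nabla J(x_c))$ (elementwise, with $\mathrm{sign}(0)=0$), and let $y=x_c+\eta\hat\delta$. Then $\overline{J}^1(y)\le\overline{J}^1(x_c)$ for every $$\eta\in\Big[0,\ \min\Big(\min_i\frac{|\nabla J(x_c)_i|}{\lambda(\|\hat\delta\|_2+|\hat\delta_i|)},\,1\Big)\Big],$$ with the convention that if $\nabla J(x_c)=0$ (so $\hat\delta=0$ and $y=x_c$) the inner minimum is read as $+\infty$.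
   Context: $\hat\delta$ equals $x^*(x_c)-x_c$, where $x^*(x_c)=x_c+\varepsilon\,\mathrm{sign}(\nabla J(x_c))$ is the maximizer of the supremum defining $\overline{J}^1(x_c)$ for $p=\infty$. *)

(* Points of R^n are row vectors 'rV[R]_n, whose
   canonical norm `|x| (mx_norm) is the max (infinity) norm. *)
From HB Require Import structures.
From mathcomp Require Import all_boot all_order all_algebra.
From mathcomp Require Import all_classical all_reals all_analysis.
Set Implicit Arguments. Unset Strict Implicit. Unset Printing Implicit Defensive.
Import Order.TTheory GRing.Theory Num.Theory.
Import numFieldNormedType.Exports.
Local Open Scope classical_set_scope.
Local Open Scope ring_scope.

Section Defs.
Variables (R : realType) (n : nat).

Definition evec (i : 'I_n) : 'rV[R]_n := delta_mx 0 i.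

Definition norm2 (v : 'rV[R]_n) : R := Num.sqrt (\sum_i v 0 i ^+ 2).

Definition dotv (u v : 'rV[R]_n) : R := \sum_i u 0 i * v 0 i.

Definition pder (f : 'rV[R]_n -> R) (i : 'I_n) (x : 'rV[R]_n) : R :=
  'D_(evec i) f x.

Definition grad (f : 'rV[R]_n -> R) (x : 'rV[R]_n) : 'rV[R]_n :=
  \row_i pder f i x.

Definition hess (f : 'rV[R]_n -> R) (x : 'rV[R]_n) : 'M[R]_n :=
  \matrix_(i, j) pder (pder f i) j x.

Definition C2_on (U : set 'rV[R]_n) (f : 'rV[R]_n -> R) : Prop :=
  {within U, continuous f} /\
  (forall i, forall x, U x -> derivable f x (evec i)) /\
  (forall i, {within U, continuous (pder f i)}) /\
  (forall i j, forall x, U x -> derivable (pder f i) x (evec j)) /\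
  (forall i j, {within U, continuous (pder (pder f i) j)}).

Definition spec_norm (M : 'M[R]_n) : R :=
  sup [set norm2 (v *m M^T) | v in [set v | norm2 v <= 1]].

Definition sgv (v : 'rV[R]_n) : 'rV[R]_n := map_mx (fun a => Num.sg a) v.

Definition boxX (xc : 'rV[R]_n) (eps : R) : set 'rV[R]_n :=
  [set x | `|x - xc| <= eps].

Definition Jbar1 (J : 'rV[R]_n -> R) (lam : R) (X : set 'rV[R]_n)
  (y : 'rV[R]_n) : R :=
  J y + sup [set dotv (grad J y) (x - y) + lam / 2 * norm2 (x - y) ^+ 2
            | x in X].

End Defs.

(* At [xc] the quadratic model [x |-> <g, x - xc> + lam/2 |x - xc|^2], with
   [g = grad J xc], is maximised over the box at the corner [xc + dhat],
   [dhat = eps sign(g)]; hence [Jbar1 xc >= J xc + <g, dhat> + lam/2 |dhat|^2].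
   At [y = xc + eta dhat], the Hessian bound along the segment [[xc, y]]
   (mean value theorem for [J] and for [<grad J, w>]) gives, for [w = x - y],
   [J y + <grad J y, w> + lam/2 |w|^2 <= J xc + <g, x - xc> + lam/2 (eta |dhat| + |w|)^2].
   For [x] in the box, [|w|] is controlled by the l1-distance [T] from [x - xc]
   to the corner [dhat], while the choice of [eta] makes the loss
   [<g, dhat> - <g, x - xc>] at least [lam eta (|dhat| + eps) T], which is
   exactly what the right-hand side needs to stay below the value at [xc]. *)

From HB Require Import structures.
From mathcomp Require Import all_boot all_order all_algebra.
From mathcomp Require Import all_classical all_reals all_analysis.
From mathcomp Require Import ring lra.
Set Implicit Arguments. Unset Strict Implicit. Unset Printing Implicit Defensive.
Import Order.TTheory GRing.Theory Num.Theory.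
Import numFieldNormedType.Exports.
Local Open Scope classical_set_scope.
Local Open Scope ring_scope.

Section MeanValue.
Variable R : realType.
Implicit Types (f df : R -> R) (a b K M : R).

Lemma is_derive_mull K (t : R) : is_derive t 1 ( *%R K) K.
Proof.
by have := is_deriveZ K (@is_derive_id _ R t 1); rewrite /GRing.scale /= mulr1.
Qed.

Lemma is_derive_mul_sqr K (t : R) : is_derive t 1 (fun s => K * s ^+ 2) (K * (2 * t)).
Proof.
have id_t := @is_derive_id _ R t 1.
by apply: is_derive_eq (is_deriveZ K (is_deriveM id_t id_t)) _; rewrite /GRing.scale /=; ring.
Qed.

Lemma mvt_exists f df a b : a <= b ->
  (forall t, a <= t <= b -> is_derive t 1 f (df t)) ->
  exists2 c, a <= c <= b & f b - f a = df c * (b - a).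
Proof.
move=> ab fdf; have [c] : exists2 c, c \in `[a, b] & f b - f a = df c * (b - a).
  apply: MVT_segment => // [t|].
    by rewrite in_itv /= => /andP[/ltW ? /ltW ?]; apply: fdf; apply/andP.
  apply: derivable_within_continuous => t; rewrite in_itv /= => /fdf.
  by case.
by rewrite in_itv; exists c.
Qed.

Lemma ler_norm_mvt f df a b K M : a <= b ->
  (forall t, a <= t <= b -> is_derive t 1 f (df t) /\ `|df t - K| <= M) ->
  `|f b - f a - K * (b - a)| <= M * (b - a).
Proof.
move=> ab fdf.
have [c /fdf[_ dfcM] fE] : exists2 c, a <= c <= b &
    (f b - K * b) - (f a - K * a) = (df c - K) * (b - a).
  apply: (@mvt_exists (fun s => f s - K * s) (fun s => df s - K) _ _ ab).
  move=> t /fdf[dft _].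
  exact: is_deriveB dft (is_derive_mull K t).
have -> : f b - f a - K * (b - a) = (f b - K * b) - (f a - K * a) by ring.
by rewrite fE normrM (ger0_norm (x := b - a)) ?subr_ge0 // ler_wpM2r // subr_ge0.
Qed.

Lemma ler_norm_mvt0 f df b K M :
  (forall t : R, `|t| <= `|b| -> is_derive t 1 f (df t) /\ `|df t - K| <= M) ->
  `|f b - f 0 - K * b| <= M * `|b|.
Proof.
move=> fdf; have [b0|b0] := leP 0 b.
  rewrite -[b in K * b]subr0 (ger0_norm b0) -[b in M * b]subr0.
  apply: ler_norm_mvt => // t /andP[t0 tb]; apply: fdf.
  by rewrite !ger0_norm.
have -> : f b - f 0 - K * b = - (f 0 - f b - K * (0 - b)) by ring.
rewrite normrN (ltr0_norm b0) -[in M * _]sub0r.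
apply: ler_norm_mvt (ltW b0) _ => t /andP[bt t0]; apply: fdf.
by rewrite (ltr0_norm b0) ler0_norm // lerN2.
Qed.

End MeanValue.

Section DirectionalDerivative.
Variables (R : realType) (n : nat).
Implicit Types (F : 'rV[R]_n -> R) (p v w x z : 'rV[R]_n).

Lemma is_derive_line F p v (t L : R) : is_derive (p + t *: v) v F L ->
  is_derive t 1 (fun s => F (p + s *: v)) L.
Proof.
case=> dF DF.
have E : (fun h : R => h^-1 *: (((fun s => F (p + s *: v)) \o shift t) (h *: 1)
           - F (p + t *: v))) =
         (fun h : R => h^-1 *: ((F \o shift (p + t *: v)) (h *: v) - F (p + t *: v))).
  apply/funext => h /=; congr (_ *: (F _ - _)).
  by rewrite /shift /= -[h%:A]/(h * 1) mulr1 scalerDl addrCA.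
by apply: DeriveDef; [rewrite /derivable E | rewrite /derive E].
Qed.

Lemma rV_norm_le v (c : R) : 0 <= c -> (forall i, `|v 0 i| <= c) -> `|v| <= c.
Proof.
move=> c0 vc; rewrite [`|v|]mx_normrE.
by apply: bigmax_le => // -[i j] _ /=; rewrite (ord1 i).
Qed.

Lemma rV_entry_le_norm v i : `|v 0 i| <= `|v|.
Proof.
rewrite [`|v|]mx_normrE.
exact: (le_bigmax _ (fun ij : 'I_1 * 'I_n => `|v ij.1 ij.2|) (0, i)).
Qed.

(* [x + h *: rV_prefix w k], [k = 0 .. n], walks from [x] to [x + h *: w]
   one coordinate direction at a time. *)
Definition rV_prefix v (k : nat) : 'rV[R]_n :=
  \row_j (if (j < k)%N then v 0 j else 0).

Lemma rV_prefix0 v : rV_prefix v 0 = 0.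
Proof. by apply/rowP => j; rewrite !mxE. Qed.

Lemma rV_prefix_full v : rV_prefix v n = v.
Proof. by apply/rowP => j; rewrite !mxE ltn_ord. Qed.

Lemma rV_prefixS v (k : 'I_n) :
  rV_prefix v k.+1 = rV_prefix v k + v 0 k *: evec R k.
Proof.
apply/rowP => j; rewrite !mxE eqxx /= ltnS.
case: (ltngtP j k) => [jk|kj|/val_inj->]; last by rewrite eqxx add0r mulr1.
- by rewrite -val_eqE /= (ltn_eqF jk) mulr0 addr0.
- by rewrite -val_eqE /= (gtn_eqF kj) mulr0 addr0.
Qed.

Lemma norm_prefix_step v (k : 'I_n) (h t : R) : `|t| <= `|h * v 0 k| ->
  `|h *: rV_prefix v k + t *: evec R k| <= `|h| * `|v|.
Proof.
move=> tle; apply: rV_norm_le => [|j]; first exact: mulr_ge0.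
rewrite !mxE eqxx /=.
case: (ltngtP j k) => [jk|kj|/val_inj->].
- by rewrite -val_eqE /= (ltn_eqF jk) mulr0 addr0 normrM ler_wpM2l ?rV_entry_le_norm.
- by rewrite -val_eqE /= (gtn_eqF kj) !mulr0 addr0 normr0 mulr_ge0.
- rewrite eqxx mulr0 add0r mulr1; apply: le_trans tle _.
  by rewrite normrM ler_wpM2l ?rV_entry_le_norm.
Qed.

Section NearlyConstantPartials.
Variables (F : 'rV[R]_n -> R) (x : 'rV[R]_n) (e r : R).
Hypothesis partialsF : forall j z, `|x - z| < r ->
  derivable F z (evec R j) /\ `|pder F j z - pder F j x| <= e.

Lemma partial_step_bound w (h : R) (k : 'I_n) : `|h| * `|w| < r ->
  `|F (x + h *: rV_prefix w k.+1) - F (x + h *: rV_prefix w k)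
    - pder F k x * (h * w 0 k)| <= e * `|h * w 0 k|.
Proof.
move=> hw.
have := @ler_norm_mvt0 R (fun s => F (x + h *: rV_prefix w k + s *: evec R k))
  (fun s => pder F k (x + h *: rV_prefix w k + s *: evec R k))
  (h * w 0 k) (pder F k x) e.
rewrite /= scale0r addr0 rV_prefixS scalerDr scalerA addrA => mvt.
apply: mvt => t tle.
have /(partialsF k)[dF dFe] : `|x - (x + h *: rV_prefix w k + t *: evec R k)| < r.
  by rewrite -addrA opprD addNKr normrN; exact/(le_lt_trans _ hw)/norm_prefix_step.
by split=> //; apply/is_derive_line/derivableP.
Qed.

Lemma partials_increment_bound w (h : R) : `|h| * `|w| < r ->
  `|F (x + h *: w) - F x - h * dotv (grad F x) w|
    <= e * (`|h| * \sum_j `|w 0 j|).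
Proof.
move=> hw.
have telescope : F (x + h *: w) - F x =
    \sum_(k < n) (F (x + h *: rV_prefix w k.+1) - F (x + h *: rV_prefix w k)).
  have := telescope_sumr (fun k => F (x + h *: rV_prefix w k)) (leq0n n).
  by rewrite big_mkord /= rV_prefix_full rV_prefix0 scaler0 addr0.
have -> : h * dotv (grad F x) w = \sum_k pder F k x * (h * w 0 k).
  by rewrite /dotv mulr_sumr; apply: eq_bigr => k _; rewrite mxE; ring.
rewrite telescope -sumrB (le_trans (ler_norm_sum _ _ _)) // !mulr_sumr.
by apply: ler_sum => k _; rewrite -normrM partial_step_bound.
Qed.

End NearlyConstantPartials.

Lemma is_derive_partials F (U : set 'rV[R]_n) x w : open U -> U x ->
  (forall j z, U z -> derivable F z (evec R j)) ->
  (forall j, {for x, continuous (pder F j)}) ->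
  is_derive x w F (dotv (grad F x) w).
Proof.
move=> oU Ux dF cF; set L := dotv _ _.
suff C : (fun h : R => h^-1 *: ((F \o shift x) (h *: w) - F x)) @ 0^' --> L.
  apply: DeriveDef; first by apply/cvg_ex; exists L.
  exact: cvg_lim C.
apply/cvgrPdist_le => e e0.
set S := \sum_j `|w 0 j|.
have S0 : 0 <= S by apply: sumr_ge0.
set e' := e / (S + 1).
have e'0 : 0 < e' by rewrite divr_gt0 // ltr_wpDl.
have : \forall z \near x, U z /\ forall j, `|pder F j z - pder F j x| <= e'.
  near=> z; split; first by near: z; exact: (open_nbhs_nbhs (conj oU Ux)).
  near: z; apply: filter_forall => j.
  by have /cvgrPdist_le /(_ _ e'0) := cF j; apply: filterS => z; rewrite distrC.
move=> /nbhs_normP[r /= r0 near_x].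
have partialsF j z : `|x - z| < r ->
    derivable F z (evec R j) /\ `|pder F j z - pder F j x| <= e'.
  by move=> /near_x[Uz ?]; split; [exact: dF|].
near=> h.
have h0 : h != 0 by near: h; exact: nbhs_dnbhs_neq.
have hw : `|h| * `|w| < r.
  have : `|h| < r / (`|w| + 1) by near: h; apply: dnbhs0_lt; rewrite divr_gt0 // ltr_wpDl.
  rewrite ltr_pdivlMr ?ltr_wpDl // => /(le_lt_trans _); apply.
  by rewrite ler_wpM2l // lerDl.
have := partials_increment_bound partialsF hw; rewrite [x + _]addrC.
have -> : L - h^-1 *: (F (h *: w + x) - F x) =
    - (h^-1 * (F (h *: w + x) - F x - h * L)) by rewrite /GRing.scale /=; field.
rewrite normrN normrM normfV => inc.
rewrite ler_pdivrMl ?normr_gt0 // (le_trans inc) // mulrCA ler_wpM2l //.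
by rewrite /e' mulrAC ler_pdivrMr ?ltr_wpDl // ler_wpM2l ?(ltW e0) // lerDl.
Unshelve. all: by end_near.
Qed.

End DirectionalDerivative.

Section Euclidean.
Variables (R : realType) (n : nat).
Implicit Types (u v w : 'rV[R]_n).

Lemma dotvDr u v w : dotv u (v + w) = dotv u v + dotv u w.
Proof. by rewrite /dotv -big_split; apply: eq_bigr => i _; rewrite mxE mulrDr. Qed.

Lemma dotvZr u v (a : R) : dotv u (a *: v) = a * dotv u v.
Proof. by rewrite /dotv mulr_sumr; apply: eq_bigr => i _; rewrite mxE mulrCA. Qed.

Lemma dotvZl u v (a : R) : dotv (a *: u) v = a * dotv u v.
Proof. by rewrite /dotv mulr_sumr; apply: eq_bigr => i _; rewrite mxE mulrA. Qed.

Lemma norm2_ge0 v : 0 <= norm2 v.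
Proof. exact: sqrtr_ge0. Qed.

Lemma sqr_norm2 v : norm2 v ^+ 2 = \sum_i v 0 i ^+ 2.
Proof. by rewrite sqr_sqrtr // sumr_ge0 // => i _; rewrite sqr_ge0. Qed.

Lemma norm2_gt0 v : v != 0 -> 0 < norm2 v.
Proof.
apply: contraNT; rewrite -leNgt => v_le0; apply/eqP/rowP => i; rewrite mxE.
have sum0 : \sum_i v 0 i ^+ 2 = 0.
  by apply/eqP; rewrite -sqr_norm2 sqrf_eq0 eq_le v_le0 norm2_ge0.
by apply/eqP; rewrite -sqrf_eq0 (psumr_eq0P _ sum0) // => j _; rewrite sqr_ge0.
Qed.

Lemma norm2Z (a : R) v : norm2 (a *: v) = `|a| * norm2 v.
Proof.
rewrite /norm2 (eq_bigr (fun i => a ^+ 2 * v 0 i ^+ 2)) => [|i _]; last first.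
  by rewrite mxE exprMn.
by rewrite -mulr_sumr sqrtrM ?sqr_ge0 // sqrtr_sqr.
Qed.

Lemma ler_sqr_sum (t : 'I_n -> R) : (forall i, 0 <= t i) ->
  \sum_i t i ^+ 2 <= (\sum_i t i) ^+ 2.
Proof.
move=> t_ge0; rewrite expr2 mulr_suml; apply: ler_sum => i _.
by rewrite expr2 ler_wpM2l // (bigD1 i) //= lerDl sumr_ge0.
Qed.

Lemma norm2_le_sum v : norm2 v <= \sum_i `|v 0 i|.
Proof.
rewrite -[leRHS]ger0_norm ?sumr_ge0 // -sqrtr_sqr /norm2 ler_wsqrtr //.
under eq_bigr do rewrite -real_normK ?num_real //.
exact: ler_sqr_sum.
Qed.

Lemma ler_norm2_entry v i : `|v 0 i| <= norm2 v.
Proof.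
rewrite -sqrtr_sqr /norm2 ler_wsqrtr // (bigD1 i) //= lerDl.
by apply: sumr_ge0 => j _; rewrite sqr_ge0.
Qed.

Lemma sqr_norm2D u v :
  norm2 (u + v) ^+ 2 = norm2 u ^+ 2 + 2 * dotv u v + norm2 v ^+ 2.
Proof.
rewrite !sqr_norm2 /dotv mulr_sumr -!big_split /=.
by apply: eq_bigr => i _; rewrite mxE; ring.
Qed.

Lemma ler_dotv u v : `|dotv u v| <= norm2 u * norm2 v.
Proof.
have [->|u0] := eqVneq u 0.
  by rewrite -(scale0r 0) dotvZl mul0r normr0 mulr_ge0 ?norm2_ge0.
have [->|v0] := eqVneq v 0.
  by rewrite -(scale0r 0) dotvZr mul0r normr0 mulr_ge0 ?norm2_ge0.
set a := norm2 u; set b := norm2 v.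
have a0 : 0 < a by exact: norm2_gt0.
have b0 : 0 < b by exact: norm2_gt0.
have sqr_ge0_at (s : R) : s ^+ 2 = 1 -> 0 <= a * b + s * dotv u v.
  move=> s2; rewrite -(pmulr_rge0 _ (mulr_gt0 a0 b0)) -(pmulr_rge0 _ (ltr0Sn _ 1)).
  have <- : norm2 (b *: u + (s * a) *: v) ^+ 2 = 2 * (a * b * (a * b + s * dotv u v)).
    rewrite sqr_norm2D !norm2Z dotvZl dotvZr !exprMn !real_normK ?num_real //.
    by rewrite exprMn s2 mul1r -/a -/b; ring.
  exact: sqr_ge0.
have sqrN1 : (-1 : R) ^+ 2 = 1 by rewrite sqrrN expr1n.
have := sqr_ge0_at 1 (expr1n _ _); have := sqr_ge0_at (-1) sqrN1.
by rewrite ler_norml; lra.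
Qed.

Lemma ler_norm2D u v : norm2 (u + v) <= norm2 u + norm2 v.
Proof.
rewrite -[leRHS]ger0_norm ?addr_ge0 ?norm2_ge0 // -sqrtr_sqr.
rewrite {1}/norm2 ler_wsqrtr // -sqr_norm2 sqr_norm2D.
have := ler_dotv u v; rewrite ler_norml => /andP[_ ?]; nra.
Qed.

Lemma norm2_mulmx_tr_le (M : 'M[R]_n) v : norm2 (v *m M^T) <= spec_norm M * norm2 v.
Proof.
set S := [set norm2 (u *m M^T) | u in [set u : 'rV[R]_n | norm2 u <= 1]].
have S_ub : has_ubound S.
  exists (\sum_i \sum_j `|M i j|) => _ [u /= u1 <-].
  apply: le_trans (norm2_le_sum _) _; apply: ler_sum => i _.
  rewrite mxE; apply: le_trans (ler_norm_sum _ _ _) _; apply: ler_sum => j _.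
  rewrite mxE normrM -[leRHS]mul1r ler_wpM2r //.
  exact: le_trans (ler_norm2_entry _ _) u1.
have [->|v0] := eqVneq v 0.
  by rewrite mul0mx -(scale0r 0) norm2Z normr0 !mul0r mulr0.
have vp := norm2_gt0 v0.
have : S (norm2 (((norm2 v)^-1 *: v) *m M^T)).
  by exists ((norm2 v)^-1 *: v) => //=; rewrite norm2Z gtr0_norm ?invr_gt0 // mulVf ?gt_eqF.
move=> /(ub_le_sup S_ub); rewrite -scalemxAl norm2Z gtr0_norm ?invr_gt0 //.
by rewrite -ler_pdivlMl ?invr_gt0 // invrK mulrC.
Qed.

End Euclidean.

Section Segment.
Variables (R : realType) (n : nat) (F : 'rV[R]_n -> R) (U : set 'rV[R]_n)
  (p v : 'rV[R]_n) (lam : R).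
Hypotheses (oU : open U) (C2F : C2_on U F)
  (segU : forall t, 0 <= t <= 1 -> U (p + t *: v))
  (hessF : forall t, 0 <= t <= 1 -> spec_norm (hess F (p + t *: v)) <= lam).

Let continuous_at_open (f : 'rV[R]_n -> R) z :
  {within U, continuous f} -> U z -> {for z, continuous f}.
Proof. by rewrite continuous_open_subspace // => cf Uz; apply: cf; rewrite inE. Qed.

Lemma is_derive_segment (s : R) : 0 <= s <= 1 ->
  is_derive s 1 (fun s => F (p + s *: v)) (dotv (grad F (p + s *: v)) v).
Proof.
move=> s01; case: C2F => _ [dF [cF _]].
apply/is_derive_line/(is_derive_partials _ oU (segU s01) dF) => j.
exact: continuous_at_open (cF j) (segU s01).
Qed.

Lemma is_derive_segment_grad w (s : R) : 0 <= s <= 1 ->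
  is_derive s 1 (fun s => dotv (grad F (p + s *: v)) w)
    (dotv (v *m (hess F (p + s *: v))^T) w).
Proof.
move=> s01; case: C2F => _ [_ [_ [d2F c2F]]].
have -> : (fun s => dotv (grad F (p + s *: v)) w) =
    \sum_i (w 0 i \*: (fun s => pder F i (p + s *: v))).
  by apply/funext => t; rewrite fct_sumE /dotv; apply: eq_bigr => i _; rewrite mxE mulrC.
apply: is_derive_eq.
  apply: is_derive_sum => i; apply/is_deriveZ/is_derive_line.
  apply: (is_derive_partials _ oU (segU s01) (d2F i)) => j.
  exact: continuous_at_open (c2F i j) (segU s01).
rewrite /dotv; apply: eq_bigr => i _; rewrite /= [RHS]mulrC !mxE; congr (_ * _).
by apply: eq_bigr => j _; rewrite !mxE mulrC.
Qed.

Lemma segment_grad_le w (t : R) : 0 <= t <= 1 ->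
  dotv (grad F (p + t *: v)) w - dotv (grad F p) w
    <= lam * t * (norm2 v * norm2 w).
Proof.
case/andP => t0 t1.
have := @ler_norm_mvt R (fun s => dotv (grad F (p + s *: v)) w)
  (fun s => dotv (v *m (hess F (p + s *: v))^T) w) 0 t 0 (lam * (norm2 v * norm2 w)) t0.
rewrite /= scale0r addr0 !subr0 mul0r subr0 => mvt.
rewrite (le_trans (ler_norm _)) // mulrAC mvt // => s /andP[s0 st].
have s01 : 0 <= s <= 1 by rewrite s0 (le_trans st t1).
split; first exact: is_derive_segment_grad.
rewrite subr0 (le_trans (ler_dotv _ _)) // mulrA ler_wpM2r ?norm2_ge0 //.
by rewrite (le_trans (norm2_mulmx_tr_le _ _)) // ler_wpM2r ?norm2_ge0 ?hessF.
Qed.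

Lemma segment_taylor_le (t : R) : 0 <= t <= 1 ->
  F (p + t *: v) <= F p + t * dotv (grad F p) v + lam / 2 * t ^+ 2 * norm2 v ^+ 2.
Proof.
case/andP => t0 t1; set K := dotv (grad F p) v; set C := lam / 2 * norm2 v ^+ 2.
pose k s := F (p + s *: v) - K * s - C * s ^+ 2.
pose dk s := dotv (grad F (p + s *: v)) v - K - C * (2 * s).
have k_derive s : 0 <= s <= t -> is_derive s 1 k (dk s).
  case/andP => s0 st; have s01 : 0 <= s <= 1 by rewrite s0 (le_trans st t1).
  apply: is_deriveB (is_derive_mul_sqr C s).
  exact: is_deriveB (is_derive_segment s01) (is_derive_mull K s).
have [c /andP[c0 ct] kE] := mvt_exists t0 k_derive.
have dk_le0 : dk c <= 0.
  have c01 : 0 <= c <= 1 by rewrite c0 (le_trans ct t1).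
  have := segment_grad_le v c01; rewrite subr_le0 /C -/K -expr2 => grad_le.
  by rewrite (le_trans grad_le) // le_eqVlt; apply/orP; left; apply/eqP; field.
have : k t - k 0 <= 0 by rewrite kE subr0 mulr_le0_ge0.
rewrite /k scale0r addr0 !mulr0 expr0n /= mulr0 !subr0 subr_le0.
by rewrite /C; lra.
Qed.

Lemma segment_model_le w (t : R) : 0 <= t <= 1 ->
  F (p + t *: v) + dotv (grad F (p + t *: v)) w + lam / 2 * norm2 w ^+ 2
    <= F p + dotv (grad F p) (t *: v + w)
       + lam / 2 * (t * norm2 v + norm2 w) ^+ 2.
Proof.
move=> t01; have := segment_taylor_le t01; have := segment_grad_le w t01.
rewrite dotvDr dotvZr; nra.
Qed.

End Segment.

Section SignCorner.
Variables (R : realType) (n : nat) (g d : 'rV[R]_n) (eps : R).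
Hypotheses (g_neq0 : forall i, g 0 i != 0) (d_box : `|d| <= eps).

Local Notation dhat := (eps *: sgv g).

Let sg_sqr i : Num.sg (g 0 i) ^+ 2 = 1.
Proof. by rewrite sqr_sg g_neq0. Qed.

Let dhat_entry i : dhat 0 i = eps * Num.sg (g 0 i).
Proof. by rewrite !mxE. Qed.

Let d_entry_le i : `|d 0 i| <= eps.
Proof. exact: le_trans (rV_entry_le_norm _ _) d_box. Qed.

(* The l1-distance from [d] to the corner [dhat]. *)
Let slack := \sum_i (eps - Num.sg (g 0 i) * d 0 i).

Let slack_entry_ge0 i : 0 <= eps - Num.sg (g 0 i) * d 0 i.
Proof.
by rewrite subr_ge0 (le_trans (ler_norm _)) // normrM normr_sg g_neq0 mul1r.
Qed.

Let dotv_corner_gap :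
  dotv g dhat - dotv g d = \sum_i `|g 0 i| * (eps - Num.sg (g 0 i) * d 0 i).
Proof.
rewrite /dotv -sumrB; apply: eq_bigr => i _; rewrite dhat_entry.
have := sg_sqr i; set s := Num.sg _; set a := `|_|.
have -> : g 0 i = s * a by exact: numEsg.
move=> s2; have -> : s * a * (eps * s) = a * eps * s ^+ 2 by ring.
by rewrite s2; ring.
Qed.

Let sqr_norm2_off_corner (eta : R) :
  norm2 (d - eta *: dhat) ^+ 2 <= (1 - eta) ^+ 2 * norm2 dhat ^+ 2 + 2 * eta * eps * slack.
Proof.
rewrite !sqr_norm2 /slack mulr_sumr mulr_sumr -big_split /=; apply: ler_sum => i _.
(* Coordinatewise, the two sides differ by [eps ^+ 2 - d 0 i ^+ 2]. *)
rewrite !mxE; have := sg_sqr i; set s := Num.sg _ => s2.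
have d_le : d 0 i ^+ 2 <= eps ^+ 2.
  by rewrite -real_normK ?num_real // lerXn2r ?nnegrE // (le_trans _ (d_entry_le i)).
have -> : (d 0 i - eta * (eps * s)) ^+ 2 =
    d 0 i ^+ 2 - 2 * eta * eps * (s * d 0 i) + (eta * eps) ^+ 2 * s ^+ 2 by ring.
rewrite [(eps * s) ^+ 2]exprMn s2 !mulr1; lra.
Qed.

Let norm2_off_corner (eta : R) : eta <= 1 ->
  norm2 (d - eta *: dhat) <= (1 - eta) * norm2 dhat + slack.
Proof.
move=> eta_le1; have -> : d - eta *: dhat = (1 - eta) *: dhat + (d - dhat).
  by apply/rowP => i; rewrite !mxE; ring.
rewrite (le_trans (ler_norm2D _ _)) // (norm2Z (1 - eta)) ger0_norm ?subr_ge0 // lerD2l.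
rewrite (le_trans (norm2_le_sum _)) // le_eqVlt; apply/orP; left; apply/eqP.
apply: eq_bigr => i _; rewrite !mxE.
have -> : d 0 i - eps * Num.sg (g 0 i) =
    Num.sg (g 0 i) * (Num.sg (g 0 i) * d 0 i - eps).
  by rewrite mulrBr mulrA -expr2 sg_sqr mul1r mulrC.
by rewrite normrM normr_sg g_neq0 mul1r distrC ger0_norm ?slack_entry_ge0.
Qed.

Lemma box_model_le (lam eta : R) : 0 <= lam -> 0 <= eta <= 1 ->
  (forall i, lam * eta * (norm2 dhat + eps) <= `|g 0 i|) ->
  dotv g d + lam / 2 * (eta * norm2 dhat + norm2 (d - eta *: dhat)) ^+ 2
    <= dotv g dhat + lam / 2 * norm2 dhat ^+ 2.
Proof.
move=> lam_ge0 /andP[eta_ge0 eta_le1] eta_small.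
set D := norm2 dhat; set W := norm2 (d - eta *: dhat).
have slack_ge0 : 0 <= slack by apply: sumr_ge0 => i _; apply: slack_entry_ge0.
have gap_ge : lam * eta * (D + eps) * slack <= dotv g dhat - dotv g d.
  rewrite dotv_corner_gap /slack mulr_sumr; apply: ler_sum => i _.
  by rewrite ler_wpM2r ?slack_entry_ge0.
have sqr_le : (eta * D + W) ^+ 2 <= D ^+ 2 + 2 * eta * (D + eps) * slack.
  have := sqr_norm2_off_corner eta; rewrite -/D -/W => W_sqr_le.
  have := ler_wpM2l (mulr_ge0 eta_ge0 (norm2_ge0 dhat)) (norm2_off_corner eta_le1).
  rewrite -/D -/W => W_le; lra.
have := ler_wpM2l (divr_ge0 lam_ge0 (ler0n _ 2)) sqr_le; nra.
Qed.

End SignCorner.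

Section Jbar1Bounds.
Variables (R : realType) (n : nat) (J : 'rV[R]_n -> R) (lam : R)
  (X : set 'rV[R]_n) (y : 'rV[R]_n) (B : R).
Hypothesis model_le : forall x, X x ->
  dotv (grad J y) (x - y) + lam / 2 * norm2 (x - y) ^+ 2 <= B.

Lemma Jbar1_le : X !=set0 -> Jbar1 J lam X y <= J y + B.
Proof.
move=> X0; rewrite lerD2l; apply: ge_sup => [|_ [x Xx <-]]; last exact: model_le.
exact: image_nonempty.
Qed.

Lemma model_le_Jbar1 x : X x ->
  J y + (dotv (grad J y) (x - y) + lam / 2 * norm2 (x - y) ^+ 2) <= Jbar1 J lam X y.
Proof.
move=> Xx; rewrite lerD2l; apply: ub_le_sup; last by exists x.
by exists B => _ [z Xz <-]; exact: model_le.
Qed.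

End Jbar1Bounds.

Lemma step_size_condition (R : realType) (n : nat) (g : 'rV[R]_n) (eps lam eta : R) :
  0 < eps -> 0 < lam -> 0 < eta ->
  (forall i, eta <= `|g 0 i| /
     (lam * (norm2 (eps *: sgv g) + `|(eps *: sgv g) 0 i|))) ->
  forall i, g 0 i != 0 /\ lam * eta * (norm2 (eps *: sgv g) + eps) <= `|g 0 i|.
Proof.
move=> eps_gt0 lam_gt0 eta_gt0 eta_small i.
have gi_neq0 : g 0 i != 0.
  apply: contraTneq eta_gt0 => gi0; rewrite -leNgt.
  by have := eta_small i; rewrite gi0 normr0 mul0r.
split=> //; have := eta_small i.
rewrite 2!mxE normrM normr_sg gi_neq0 mulr1 gtr0_norm //.
by rewrite ler_pdivlMr ?mulr_gt0 ?ltr_wpDl ?norm2_ge0 // mulrA [eta * lam]mulrC.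
Qed.

Section LinearizedObjective.
Variables (R : realType) (n : nat) (J : 'rV[R]_n -> R) (xc : 'rV[R]_n) (eps lam : R).
Hypotheses (eps_gt0 : 0 < eps) (lam_ge0 : 0 <= lam)
  (g_neq0 : forall i, grad J xc 0 i != 0).

Local Notation g := (grad J xc).
Local Notation dhat := (eps *: sgv (grad J xc)).
Local Notation X := (boxX xc eps).

Lemma box_segment_corner t : 0 <= t <= 1 -> X (xc + t *: dhat).
Proof.
case/andP => t0 t1; rewrite /boxX /= addrC addKr normrZ ger0_norm //.
rewrite (le_trans (ler_piMl _ t1)) //; apply: rV_norm_le => [|i]; first exact: ltW.
by rewrite 2!mxE normrM normr_sg gtr0_norm // ler_piMr ?(ltW eps_gt0) // lern1 leq_b1.
Qed.

Lemma Jbar1_center_ge :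
  J xc + (dotv g dhat + lam / 2 * norm2 dhat ^+ 2) <= Jbar1 J lam X xc.
Proof.
have model_xc x : X x ->
    dotv g (x - xc) + lam / 2 * norm2 (x - xc) ^+ 2 <= dotv g dhat + lam / 2 * norm2 dhat ^+ 2.
  move=> x_box; have eta0 : 0 <= (0 : R) <= 1 by rewrite lexx ler01.
  have := box_model_le g_neq0 x_box lam_ge0 eta0.
  rewrite mulr0 !mul0r add0r scale0r subr0 => model_le; apply: model_le => i.
  exact: normr_ge0.
have one01 : 0 <= (1 : R) <= 1 by rewrite ler01 lexx.
have := model_le_Jbar1 model_xc (box_segment_corner one01).
by rewrite scale1r [xc + dhat]addrC addrK.
Qed.

Lemma Jbar1_step_le (U : set 'rV[R]_n) (eta : R) :
  open U -> X `<=` U -> C2_on U J ->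
  (forall x, X x -> spec_norm (hess J x) <= lam) -> 0 <= eta <= 1 ->
  (forall i, lam * eta * (norm2 dhat + eps) <= `|g 0 i|) ->
  Jbar1 J lam X (xc + eta *: dhat) <= J xc + (dotv g dhat + lam / 2 * norm2 dhat ^+ 2).
Proof.
move=> oU boxU C2J hessJ eta01 eta_bound; set y := xc + eta *: dhat.
rewrite -[leRHS](addrNK (J y)) [_ - _ + _]addrC.
apply: Jbar1_le; last by exists xc; rewrite /boxX /= subrr normr0 ltW.
move=> x x_box; rewrite lerBrDl addrA.
have := segment_model_le oU C2J (fun t t01 => boxU _ (box_segment_corner t01))
  (fun t t01 => hessJ _ (box_segment_corner t01)) (x - y) eta01.
have -> : eta *: dhat + (x - y) = x - xc by apply/rowP => i; rewrite !mxE; ring.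
have -> : x - y = x - xc - eta *: dhat by apply/rowP => i; rewrite !mxE; ring.
move=> /le_trans; apply; rewrite -addrA lerD2l.
by move: (box_model_le g_neq0 x_box lam_ge0 eta01) => /(_ eta_bound).
Qed.

End LinearizedObjective.

Unset Implicit Arguments.

Theorem proposition5 (R : realType) (n0 : nat) (xc : 'rV[R]_n0) (eps lam : R)
  (J : 'rV[R]_n0 -> R) (eta : R) :
  0 < eps -> 0 < lam ->
  (exists U : set 'rV[R]_n0, open U /\ boxX xc eps `<=` U /\ C2_on U J) ->
  (forall x, boxX xc eps x -> spec_norm (hess J x) <= lam) ->
  let dhat := eps *: sgv (grad J xc) in
  0 <= eta -> eta <= 1 ->
  (grad J xc != 0 ->
     forall i, eta <= `|grad J xc 0 i| / (lam * (norm2 dhat + `|dhat 0 i|))) ->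
  Jbar1 J lam (boxX xc eps) (xc + eta *: dhat)
    <= Jbar1 J lam (boxX xc eps) xc.
Proof.
move=> eps_gt0 lam_gt0 [U [oU [boxU C2J]]] hessJ /= eta_ge0 eta_le1 eta_small.
have [->|eta_neq0] := eqVneq eta 0; first by rewrite scale0r addr0.
have [g0|/eta_small {}eta_small] := eqVneq (grad J xc) 0.
  have -> : sgv (grad J xc) = 0 by apply/rowP => i; rewrite g0 !mxE sgr0.
  by rewrite !scaler0 addr0.
have eta_gt0 : 0 < eta by rewrite lt_def eta_neq0.
have step := step_size_condition eps_gt0 lam_gt0 eta_gt0 eta_small.
have g_neq0 i := (step i).1.
have eta01 : 0 <= eta <= 1 by apply/andP.
have lam_ge0 := ltW lam_gt0.
have step_le := Jbar1_step_le eps_gt0 lam_ge0 g_neq0 oU boxU C2J hessJ eta01.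
have center_ge := Jbar1_center_ge eps_gt0 lam_ge0 g_neq0.
by apply: le_trans (step_le _) center_ge => i; case: (step i).
Qed.
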